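(* Let $\mathcal A=(Q,d,T_u,T_f,T_s,\emptyset)$ be an ABVASS, $q_r\in Q$, $\vec v_0\in\mathbb N^d$ and $Q_\ell\subseteq Q$. If $\mathcal A$ has a $(q_r,\vec v_0)$-rooted $Q_\ell$-leaf-covering deduction tree, then it has such a deduction tree of height at most $H(d,|Q|,\max^-(T_u))$.
   Context: An ABVASS is a tuple $\mathcal A=(Q,d,T_u,T_f,T_s,\emptyset)$ with $Q$ a finite set of states, $d\in\mathbb N$, and finite sets of unary rules $T_u\subseteq Q\times\mathbb Z^d\times Q$, fork rules $T_f\subseteq Q^3$, split rules $T_s\subseteq Q^3$. A deduction tree is a finite tree labelled by configurations $(q,\vec v)\in Q\times\mathbb N^d$ where each internal node $(q,\vec v)$ has either one child $(q_1,\vec v+\vec u)\in Q\times\mathbb N^d$ for a unary rule $(q,\vec u,q_1)$, two children $(q_1,\vec v),(q_2,\vec v)$ for a fork rule $(q,q_1,q_2)$, or two children $(q_1,\vec v_1),(q_2,\vec v_2)$ with $\vec v_1+\vec v_2=\vec v$ for a split rule $(q,q_1,q_2)$. It is $(q_r,\vec v_0)$-rooted if its root is labelled $(q_r,\vec v_0)$, $Q_\ell$-leaf-covering if every leaf label $(q,\vec v)$ has $q\in Q_\ell$ (no condition on $\vec v$), and its height is the maximum number of edges on a root-to-leaf path. $\max^-(T_u)$ is the largest absolute value of a negative integer occurring in a vector of $T_u$ (and $0$ if there is none). For integers $d,m\ge0$, $s\ge1$: $H(0,s,m)=s$ and $H(d+1,s,m)=s\,(m\cdot 2^{H(d,s,m)})^{d+1}+H(d,s,m)$.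 *)

From HB Require Import structures.
From mathcomp Require Import all_boot all_order all_algebra.
Set Implicit Arguments. Unset Strict Implicit. Unset Printing Implicit Defensive.
Import Order.TTheory GRing.Theory Num.Theory.

Inductive dtree (Q : Type) (d : nat) : Type :=
  | DLeaf  : Q -> {ffun 'I_d -> nat} -> dtree Q d
  | DUnary : Q -> {ffun 'I_d -> nat} -> dtree Q d -> dtree Q d
  | DBin   : Q -> {ffun 'I_d -> nat} -> dtree Q d -> dtree Q d -> dtree Q d.

Section Trees.
Variables (Q : finType) (d : nat).

Definition root_state (t : dtree Q d) : Q :=
  match t with DLeaf q _ | DUnary q _ _ | DBin q _ _ _ => q end.

Definition root_vec (t : dtree Q d) : {ffun 'I_d -> nat} :=
  match t with DLeaf _ v | DUnary _ v _ | DBin _ v _ _ => v end.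

Fixpoint height (t : dtree Q d) : nat :=
  match t with
  | DLeaf _ _ => 0
  | DUnary _ _ t1 => (height t1).+1
  | DBin _ _ t1 t2 => (maxn (height t1) (height t2)).+1
  end.

Variables (Tu : seq (Q * {ffun 'I_d -> int} * Q)) (Tf Ts : {set Q * Q * Q}).

Fixpoint deduction_tree (t : dtree Q d) : Prop :=
  match t with
  | DLeaf _ _ => True
  | DUnary q v t1 =>
      (exists u : {ffun 'I_d -> int},
          (q, u, root_state t1) \in Tu /\
          forall i : 'I_d, ((root_vec t1 i)%:Z = (v i)%:Z + u i)%R)
      /\ deduction_tree t1
  | DBin q v t1 t2 =>
      (((q, root_state t1, root_state t2) \in Tf /\
          root_vec t1 = v /\ root_vec t2 = v)
       \/
       ((q, root_state t1, root_state t2) \in Ts /\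
          forall i : 'I_d, root_vec t1 i + root_vec t2 i = v i))
      /\ deduction_tree t1 /\ deduction_tree t2
  end.

Fixpoint leaf_covering (Ql : {set Q}) (t : dtree Q d) : Prop :=
  match t with
  | DLeaf q _ => q \in Ql
  | DUnary _ _ t1 => leaf_covering Ql t1
  | DBin _ _ t1 t2 => leaf_covering Ql t1 /\ leaf_covering Ql t2
  end.

Definition negpart (z : int) : nat := if (z < 0)%R then `|z|%N else 0.

Definition maxneg : nat :=
  \max_(r <- Tu) \max_(i < d) negpart (r.1.2 i).

End Trees.

Fixpoint Hbound (d s m : nat) : nat :=
  match d with
  | 0 => s
  | d'.+1 => s * (m * 2 ^ (Hbound d' s m)) ^ d'.+1 + Hbound d' s m
  end.

From mathcomp Require Import all_boot all_algebra.
From mathcomp Require Import zify.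
From Stdlib Require Import ClassicalEpsilon.
Set Implicit Arguments. Unset Strict Implicit. Unset Printing Implicit Defensive.

(* For a set I of coordinates, an I-relaxed tree checks the counter
   conditions of the rules only on the coordinates in I, and (q, v) is
   I-coverable within h if it roots such a Ql-leaf-covering tree of height
   <= h.  By induction on k = #|I| we show that coverable configurations
   are coverable within Hbound k |Q| m, where m = max^-(Tu):
   - a configuration large (>= B := m * 2^(Hbound k)) on some i0 in I is
     (I \ i0)-coverable within Hbound k by induction, and the short tree
     remains valid on i0, which starts high enough to absorb all decrements
     along a path of that length ([relaxed_raise], [coverable_large]);
   - there are only |Q| * B^#|I| configurations small on all of I, and a
     pigeonhole argument on the increasing chain of sets of small
     configurations coverable within Hbound k + j ([chain_bound]) shows
     that j = |Q| * B^#|I| steps suffice ([coverable_Rackoff_step]).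
   The recursion of Hbound is exactly this bound; for I the full set of
   coordinates, relaxed trees are the deduction trees ([relaxed_setT]). *)

Definition classicb (P : Prop) : bool :=
  if excluded_middle_informative P then true else false.

Lemma classicbP (P : Prop) : reflect P (classicb P).
Proof. by rewrite /classicb; case: excluded_middle_informative => ?; constructor. Qed.

(* An increasing chain of subsets of a finite type in which one stationary
   step forces the next one is constant from index #|T| on: it cannot grow
   strictly more than #|T| times. *)
Section Chain.
Variables (T : finType) (S : nat -> {set T}).
Hypothesis chain_mono : forall j, S j \subset S j.+1.
Hypothesis chain_stab : forall j, S j.+1 \subset S j -> S j.+2 \subset S j.+1.

Lemma chain_monotone i j : i <= j -> S i \subset S j.
Proof.
move=> lij; rewrite -(subnKC lij); elim: (j - i) => [|n IH]; first by rewrite addn0.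
by rewrite addnS (subset_trans IH).
Qed.

Lemma chain_stationary : exists2 j0, j0 <= #|T| & S j0.+1 \subset S j0.
Proof.
case: (boolP [exists j : 'I_#|T|.+1, S j.+1 \subset S j]) => [/existsP[j st]|].
  by exists j; rewrite // -ltnS.
move/existsPn=> strict.
have grow n : n <= #|T|.+1 -> n <= #|S n|.
  elim: n => [//|n IH] lt_n; apply: leq_ltn_trans (IH (ltnW lt_n)) _.
  by apply: proper_card; rewrite properE chain_mono (strict (Ordinal lt_n)).
by have := leq_trans (grow _ (leqnn _)) (max_card _); rewrite ltnn.
Qed.

Lemma chain_bound j : S j \subset S #|T|.
Proof.
have [j0 le_j0 stab_j0] := chain_stationary.
have back n : S (j0 + n) \subset S j0.
  have stab_n k : S (j0 + k).+1 \subset S (j0 + k).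
    by elim: k => [|k IH]; rewrite ?addn0 // addnS chain_stab.
  by elim: n => [|n IH]; rewrite ?addn0 // addnS (subset_trans (stab_n n)).
case: (leqP j #|T|) => [|lt_j]; first exact: chain_monotone.
rewrite -(subnKC (leq_trans le_j0 (ltnW lt_j))).
exact: subset_trans (back _) (chain_monotone le_j0).
Qed.

End Chain.

(* Counter arithmetic for raising a coordinate: a unary rule moves a counter
   x by z (as [shift x z]); a value >= b * 2^h, with b bounding every
   decrement, survives h rule applications, a split halving it. *)
Definition shift (x : nat) (z : int) : nat :=
  match z with Posz n => x + n | Negz n => x - n.+1 end.

Lemma shiftE x z : negpart z <= x -> ((shift x z)%:Z = x%:Z + z)%R.
Proof. by case: z => n; rewrite /negpart /= ?PoszD // NegzE; lia. Qed.

Lemma shift_large b z h x :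
  negpart z <= b -> b * 2 ^ h.+1 <= x -> negpart z <= x /\ b * 2 ^ h <= shift x z.
Proof.
move=> le_z; rewrite expnS mulnCA mul2n.
have : b <= b * 2 ^ h by rewrite leq_pmulr ?expn_gt0.
by case: z le_z => n; rewrite /negpart /=; lia.
Qed.

Lemma weight_mono b h h' : h <= h' -> b * 2 ^ h <= b * 2 ^ h'.
Proof. by move=> le_h; rewrite leq_mul2l leq_exp2l ?le_h ?orbT. Qed.

Section Bound.
Variables (Q : finType) (d : nat) (Tu : seq (Q * {ffun 'I_d -> int} * Q))
  (Tf Ts : {set Q * Q * Q}) (Ql : {set Q}).

Local Notation tree := (dtree Q d).
Local Notation vec := {ffun 'I_d -> nat}.
Local Notation rs := (@root_state Q d).
Local Notation rv := (@root_vec Q d).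
Local Notation m := (maxneg Tu).

Fixpoint relaxed (I : {set 'I_d}) (t : tree) : Prop :=
  match t with
  | DLeaf _ _ => True
  | DUnary q v t1 =>
      (exists u : {ffun 'I_d -> int}, (q, u, rs t1) \in Tu /\
         forall i, i \in I -> ((rv t1 i)%:Z = (v i)%:Z + u i)%R) /\ relaxed I t1
  | DBin q v t1 t2 =>
      (((q, rs t1, rs t2) \in Tf /\ (forall i, i \in I -> rv t1 i = v i) /\
          (forall i, i \in I -> rv t2 i = v i))
       \/ ((q, rs t1, rs t2) \in Ts /\ forall i, i \in I -> rv t1 i + rv t2 i = v i))
      /\ relaxed I t1 /\ relaxed I t2
  end.

Lemma relaxed_setT t : deduction_tree Tu Tf Ts t <-> relaxed setT t.
Proof.
elim: t => [//|q v t1 IH|q v t1 IH1 t2 IH2] /=.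
- rewrite IH; split; case=> -[u [Tu_u Eu]] Ht1; split=> //; exists u; split=> // i.
  by apply: Eu; rewrite in_setT.
- rewrite IH1 IH2; split; case=> rule Ht; split=> //.
  + by case: rule => [[Tf_q [-> ->]]|[Ts_q E]]; [left|right].
  + case: rule => [[Tf_q [E1 E2]]|[Ts_q E]]; [left|right]; last first.
      by split=> // i; rewrite E ?in_setT.
    by do !split=> //; apply/ffunP=> i; rewrite (E1, E2) ?in_setT.
Qed.

Lemma relaxed_subset (I J : {set 'I_d}) t : J \subset I -> relaxed I t -> relaxed J t.
Proof.
move=> /subsetP sJI; elim: t => [//|q v t1 IH|q v t1 IH1 t2 IH2] /=.
- case=> -[u [Tu_u Eu]] /IH Ht1; split=> //.
  by exists u; split=> // i /sJI; apply: Eu.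
- case=> rule [/IH1 Ht1 /IH2 Ht2]; split=> //.
  case: rule => [[Tf_q [E1 E2]]|[Ts_q E]]; [left|right].
  + by split=> //; split=> i /sJI; [apply: E1|apply: E2].
  + by split=> // i /sJI; apply: E.
Qed.

Definition coverable (I : {set 'I_d}) (h : nat) (q : Q) (v : vec) : Prop :=
  exists t, relaxed I t /\ rs t = q /\ (forall i, i \in I -> rv t i = v i) /\
            leaf_covering Ql t /\ height t <= h.

Lemma coverable_tree (I : {set 'I_d}) t :
  relaxed I t -> leaf_covering Ql t -> coverable I (height t) (rs t) (rv t).
Proof. by exists t. Qed.

Lemma coverable_agree (I : {set 'I_d}) h q (v v' : vec) :
  (forall i, i \in I -> v i = v' i) -> coverable I h q v -> coverable I h q v'.
Proof.
move=> E [t [Ht [Hq [Hv Hh]]]]; exists t; do 3!split=> //.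
by move=> i Hi; rewrite Hv // E.
Qed.

Lemma coverable_le (I : {set 'I_d}) h h' q v : h <= h' -> coverable I h q v -> coverable I h' q v.
Proof.
move=> le_h [t [Ht [Hq [Hv [Hc Hh]]]]].
by exists t; do 4!split=> //; apply: leq_trans le_h.
Qed.

(* If every configuration coverable in h steps is coverable in h' steps,
   the same holds for h + 1 and h' + 1: shorten the subtrees of the root. *)
Lemma coverable_shorten (I : {set 'I_d}) h h' :
  (forall q v, coverable I h q v -> coverable I h' q v) ->
  forall q v, coverable I h.+1 q v -> coverable I h'.+1 q v.
Proof.
move=> short q v [t [Ht [<- [Hv [Hc Hh]]]]]; apply: (coverable_agree Hv); clear Hv.
case: t Ht Hc Hh => [q0 v0|q0 v0 t1|q0 v0 t1 t2] /= Ht Hc Hh.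
- by exists (DLeaf q0 v0).
- case: Ht => -[u [Tu_u Eu]] Ht1; rewrite ltnS in Hh.
  have [t1' [Ht1' [E1s [E1v [Hc1 Hh1]]]]] :=
    short _ _ (coverable_le Hh (coverable_tree Ht1 Hc)).
  exists (DUnary q0 v0 t1'); split; last by do 3!split.
  by split=> //; exists u; rewrite E1s; split=> // i Hi; rewrite E1v // Eu.
- case: Hc Ht => Hc1 Hc2 [rule [Ht1 Ht2]].
  rewrite ltnS geq_max in Hh; case/andP: Hh => Hh1 Hh2.
  have [t1' [Ht1' [E1s [E1v [Hc1' Hh1']]]]] :=
    short _ _ (coverable_le Hh1 (coverable_tree Ht1 Hc1)).
  have [t2' [Ht2' [E2s [E2v [Hc2' Hh2']]]]] :=
    short _ _ (coverable_le Hh2 (coverable_tree Ht2 Hc2)).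
  exists (DBin q0 v0 t1' t2'); split; last by do 3!split=> //=; rewrite ltnS geq_max Hh1' Hh2'.
  split=> //; rewrite E1s E2s; case: rule => [[Tf_q [E1 E2]]|[Ts_q E]]; [left|right].
  + by split; last split=> i Hi; rewrite ?E1v ?E2v ?E1 ?E2.
  + by split=> // i Hi; rewrite E1v // E2v // E.
Qed.

Lemma negpart_le_maxneg q u q' i : (q, u, q') \in Tu -> negpart (u i) <= m.
Proof.
move=> Tu_u; apply: leq_trans (leq_bigmax_seq _ Tu_u isT) => /=.
exact: leq_bigmax.
Qed.

Definition upd (v : vec) (i0 : 'I_d) (x : nat) : vec :=
  [ffun j => if j == i0 then x else v j].

(* An I-relaxed tree of height h whose root gets the value x >= m * 2^h on
   a coordinate i0 extends, with the same shape, to an (i0 |: I)-relaxed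
   tree: the value of i0 is propagated down the rules (copied by forks,
   halved by splits, shifted by unary rules) and never runs out. *)
Lemma relaxed_raise (I : {set 'I_d}) i0 t x :
  relaxed I t -> leaf_covering Ql t -> m * 2 ^ height t <= x ->
  exists t', relaxed (i0 |: I) t' /\ rs t' = rs t /\ rv t' = upd (rv t) i0 x /\
             leaf_covering Ql t' /\ height t' = height t.
Proof.
elim: t x => [q v|q v t1 IH|q v t1 IH1 t2 IH2] x /=.
- by move=> _ Hc _; exists (DLeaf q (upd v i0 x)).
- case=> -[u [Tu_u Eu]] Ht1 Hc Hx.
  have [neg_x big] := shift_large (negpart_le_maxneg i0 Tu_u) Hx.
  have [t1' [Ht1' [E1s [E1v [Hc1 H1]]]]] := IH _ Ht1 Hc big.
  exists (DUnary q (upd v i0 x) t1'); split; last by do 3!split=> //=; rewrite H1.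
  split=> //; exists u; rewrite E1s E1v; split=> // i.
  rewrite !ffunE in_setU1; case: eqVneq => [->|_] /= Hi; [exact: shiftE|exact: Eu].
- case=> rule [Ht1 Ht2] [Hc1 Hc2] Hx.
  have [le1 le2] : m * 2 ^ height t1 <= m * 2 ^ maxn (height t1) (height t2) /\
                   m * 2 ^ height t2 <= m * 2 ^ maxn (height t1) (height t2).
    by split; apply: weight_mono; rewrite ?leq_maxl ?leq_maxr.
  move: Hx; rewrite expnS mulnCA mul2n -addnn => Hx.
  (* A fork copies the raised value, a split shares it in two halves. *)
  have [x1 [x2 [big1 big2 rule']]] : exists x1 x2,
      [/\ m * 2 ^ height t1 <= x1, m * 2 ^ height t2 <= x2 &
          ((q, rs t1, rs t2) \in Tf /\ (forall i, i \in I -> rv t1 i = v i) /\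
             (forall i, i \in I -> rv t2 i = v i) /\ x1 = x /\ x2 = x) \/
          ((q, rs t1, rs t2) \in Ts /\ (forall i, i \in I -> rv t1 i + rv t2 i = v i) /\
             x1 + x2 = x)].
    case: rule => [[Tf_q [E1 E2]]|[Ts_q E]].
    + by exists x, x; split; [lia|lia|left].
    + by exists (x - x %/ 2), (x %/ 2); split; [lia|lia|right; do 2!split=> //; lia].
  have [t1' [Ht1' [E1s [E1v [Hc1' H1]]]]] := IH1 _ Ht1 Hc1 big1.
  have [t2' [Ht2' [E2s [E2v [Hc2' H2]]]]] := IH2 _ Ht2 Hc2 big2.
  exists (DBin q (upd v i0 x) t1' t2'); split; last by do 3!split=> //=; rewrite H1 H2.
  split=> //; rewrite E1s E2s E1v E2v.
  case: rule' => [[Tf_q [E1 [E2 [-> ->]]]]|[Ts_q [E Ex]]].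
  + left; split=> //; split=> i; rewrite !ffunE in_setU1;
      by case: eqVneq => //= _ Hi; rewrite (E1, E2).
  + right; split=> // i; rewrite !ffunE in_setU1.
    by case: eqVneq => //= _ Hi; apply: E.
Qed.

Section RackoffStep.
Variables (I : {set 'I_d}) (B H0 : nat).
Hypothesis large_coverable : forall h q (v : vec),
  (exists2 i, i \in I & B <= v i) -> coverable I h q v -> coverable I H0 q v.

Definition small_conf : finType := (Q * {ffun {i : 'I_d | i \in I} -> 'I_B})%type.

Definition small_vec (c : small_conf) : vec :=
  [ffun j => if insub j is Some i then nat_of_ord (c.2 i) else 0].

Lemma card_small_conf : #|small_conf| = #|Q| * B ^ #|I|.
Proof. by rewrite card_prod card_ffun card_ord card_sig. Qed.

Lemma small_or_large (v : vec) :
  (forall i, i \in I -> v i < B) \/ (exists2 i, i \in I & B <= v i).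
Proof.
case: (boolP [exists i in I, B <= v i]) => [/exists_inP[i]|/exists_inPn small].
  by right; exists i.
by left=> i /small; rewrite -ltnNge.
Qed.

Lemma small_conf_of q (v : vec) : (forall i, i \in I -> v i < B) ->
  exists c : small_conf, c.1 = q /\ forall i, i \in I -> small_vec c i = v i.
Proof.
move=> small; exists (q, [ffun i => Ordinal (small _ (valP i))]); split=> // i Hi.
by rewrite ffunE insubT ffunE.
Qed.

Definition reach (j : nat) : {set small_conf} :=
  [set c | classicb (coverable I (H0 + j) c.1 (small_vec c))].

Lemma reachP j q (v : vec) : (forall i, i \in I -> v i < B) ->
  (exists2 c, c \in reach j & c.1 = q /\ forall i, i \in I -> small_vec c i = v i) <->
  coverable I (H0 + j) q v.
Proof.
move=> small; split=> [[c] | Hv].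
  rewrite inE => /classicbP Hc [<- Ec]; exact: coverable_agree Hc.
have [c [Eq Ec]] := small_conf_of q small; exists c => //.
by rewrite inE Eq; apply/classicbP; apply: coverable_agree Hv => i /Ec.
Qed.

(* An inclusion of [reach j] in [reach j'] carries over to all
   configurations, the large ones being coverable within H0 anyway. *)
Lemma coverable_reach j j' q (v : vec) :
  (forall c, c \in reach j -> c \in reach j') ->
  coverable I (H0 + j) q v -> coverable I (H0 + j') q v.
Proof.
move=> sub Hv; case: (small_or_large v) => [small|large].
  by have [c /sub c_in Ec] := (reachP j q small).2 Hv; apply/(reachP j' q small); exists c.
exact: coverable_le (leq_addr _ _) (large_coverable large Hv).
Qed.

(* The sets [reach j] form an increasing chain in which a stationary step
   propagates by [coverable_shorten]; by [chain_bound] the chain is constant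
   from j = |Q| * B^#|I| on. *)
Lemma coverable_Rackoff_step h q (v : vec) :
  coverable I h q v -> coverable I (H0 + #|Q| * B ^ #|I|) q v.
Proof.
have mono j : reach j \subset reach j.+1.
  by apply/subsetP=> c; rewrite !inE => /classicbP Hc; apply/classicbP;
     apply: coverable_le Hc; rewrite leq_add2l.
have stab j : reach j.+1 \subset reach j -> reach j.+2 \subset reach j.+1.
  move=> /subsetP sub; apply/subsetP=> c; rewrite !inE !addnS => /classicbP Hc.
  apply/classicbP; apply: coverable_shorten Hc => q' v'.
  by rewrite -addnS; apply: coverable_reach.
move=> Hv; rewrite -card_small_conf.
apply: (coverable_reach (j := h)); first exact/subsetP/chain_bound.
exact: coverable_le (leq_addl _ _) Hv.
Qed.

End RackoffStep.

(* A configuration large on a coordinate i0 of I is coverable within H0 as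
   soon as everything (I \ i0)-coverable is: the shortened (I \ i0)-tree of
   height <= H0 stays valid on i0 once i0 is raised to >= m * 2^H0. *)
Lemma coverable_large (I : {set 'I_d}) i0 H0 h q (v : vec) :
  i0 \in I -> (forall h q v, coverable (I :\ i0) h q v -> coverable (I :\ i0) H0 q v) ->
  m * 2 ^ H0 <= v i0 -> coverable I h q v -> coverable I H0 q v.
Proof.
move=> I_i0 short large [t [Ht [<- [Ev [Hc Hh]]]]].
have [t' [Ht' [Eq' [Ev' [Hc' Hh']]]]] : coverable (I :\ i0) H0 (rs t) v.
  apply: (short h); exists t; split; first exact: relaxed_subset (subsetDl _ _) Ht.
  by split=> //; split=> // i /setD1P[_ /Ev].
have [t'' [Ht'' [Eq'' [Ev'' [Hc'' Hh'']]]]] :=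
  relaxed_raise i0 Ht' Hc' (leq_trans (weight_mono m Hh') large).
exists t''; rewrite (setD1K I_i0) in Ht''; split=> //; split; first by rewrite Eq''.
split; last by rewrite Hh''.
move=> i Hi; rewrite Ev'' ffunE; case: eqVneq => [-> //|ne].
by apply: Ev'; rewrite in_setD1 ne.
Qed.

Lemma coverable_Hbound k (I : {set 'I_d}) : #|I| = k ->
  forall h q v, coverable I h q v -> coverable I (Hbound k #|Q| m) q v.
Proof.
elim: k I => [|k IH] I card_I h q v Hv.
  have := coverable_Rackoff_step (B := 0) (H0 := 0) _ Hv.
  rewrite card_I expn0 muln1; apply=> h' q' v' [i].
  by rewrite (cards0_eq card_I) inE.
rewrite /= addnC -card_I; apply: coverable_Rackoff_step Hv.
move=> h' q' v' [i0 I_i0 large]; apply: (coverable_large I_i0) large => h'' q'' v''.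
by apply: IH; move: card_I; rewrite (cardsD1 i0) I_i0 => -[].
Qed.

End Bound.

Theorem lemma5p1 (Q : finType) (d : nat)
  (Tu : seq (Q * {ffun 'I_d -> int} * Q)) (Tf Ts : {set Q * Q * Q})
  (qr : Q) (v0 : {ffun 'I_d -> nat}) (Ql : {set Q}) :
  (exists t : dtree Q d,
      deduction_tree Tu Tf Ts t /\ root_state t = qr /\ root_vec t = v0 /\
      leaf_covering Ql t) ->
  exists t : dtree Q d,
      deduction_tree Tu Tf Ts t /\ root_state t = qr /\ root_vec t = v0 /\
      leaf_covering Ql t /\
      height t <= Hbound d #|Q| (maxneg Tu).
Proof.
case=> t [Ht [<- [<- Hc]]].
have card_T : #|[set: 'I_d]| = d by rewrite cardsT card_ord.
have [t' [Ht' [Eq [Ev [Hc' Hh]]]]] :=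
  coverable_Hbound card_T (coverable_tree (proj1 (relaxed_setT _ _ _ t) Ht) Hc).
exists t'; split; first exact/relaxed_setT.
by split=> //; split; [apply/ffunP=> i; rewrite Ev ?in_setT | split].
Qed.
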